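(* Let $n\ge3$, $k\ge0$, and let $S\subseteq\mathrm{Inc}(A,B)$ be independent in $G_n^k$. If $S$ contains pairs $(a_1,y)$ and $(x,b_{k+2})$ with $a_1\preceq y\prec x\preceq b_{k+2}$, then $|B(a_1,S)|+|A(b_{k+2},S)|\le k+3-n$.
   Context: For integers $n\ge3$, $k\ge0$, the crown $S_n^k$ is the poset with ground set $A\cup B$, $A=\{a_1,\dots,a_{n+k}\}$, $B=\{b_1,\dots,b_{n+k}\}$, indices cyclic modulo $n+k$; elements of $A$ are pairwise incomparable, as are elements of $B$, and $a_i$ is incomparable to $b_j$ when $j\in\{i,\dots,i+k\}$ (mod $n+k$), while $a_i<b_j$ otherwise. $\mathrm{Inc}(A,B)$ is the set of pairs $(a,b)\in A\times B$ with $a$ incomparable to $b$; $G_n^k$ has vertex set $\mathrm{Inc}(A,B)$ with $(a,b)$ adjacent to $(x,y)$ iff $a<y$ and $x<b$. $B(a,S)=\{b:(a,b)\in S\}$, $A(b,S)=\{a:(a,b)\in S\}$. Circle conventions: points $u_1,\dots,u_{n+k}$ lie clockwise on a circle, with $a_i$ and $b_i$ both at $u_i$; a chain $p_1\,R_1\,p_2\cdots p_\ell$ with $R_j\in\{\prec,\preceq\}$ means travelling clockwise from the position of $p_1$ until first reaching the position of $p_\ell$ one meets the positions of $p_2,\dots,p_{\ell-1}$ in order, $\prec$ requiring distinct consecutive positions and $\preceq$ allowing equality. *)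

From mathcomp Require Import all_boot all_order all_algebra.
Unset Printing Implicit Defensive.

(* Crown S_n^k.  Index i : 'I_(n+k) (0-based) stands for a_(i+1) / b_(i+1),
   both located at circle position u_(i+1).  Clockwise = increasing index mod n+k. *)

Definition cwd (N p q : nat) : nat := (q + N - p) %% N.

Definition incomp (n k : nat) (i j : 'I_(n+k)) : bool := cwd (n+k) i j <= k.

Definition ltAB (n k : nat) (i j : 'I_(n+k)) : bool := ~~ incomp n k i j.

Definition Inc (n k : nat) : {set 'I_(n+k) * 'I_(n+k)} :=
  [set p | incomp n k p.1 p.2].

Definition adjG (n k : nat) (p q : 'I_(n+k) * 'I_(n+k)) : bool :=
  ltAB n k p.1 q.2 && ltAB n k q.1 p.2.

Definition independent (n k : nat) (S : {set 'I_(n+k) * 'I_(n+k)}) : bool :=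
  (S \subset Inc n k) && [forall p in S, forall q in S, ~~ adjG n k p q].

Definition Bset (n k : nat) (a : 'I_(n+k)) (S : {set 'I_(n+k) * 'I_(n+k)})
  : {set 'I_(n+k)} := [set b | (a, b) \in S].
Definition Aset (n k : nat) (b : 'I_(n+k)) (S : {set 'I_(n+k) * 'I_(n+k)})
  : {set 'I_(n+k)} := [set a | (a, b) \in S].

(* circle chain  p1 ⪯ p2 ≺ p3 ⪯ p4  (positions on a circle of N points):
   travelling clockwise from p1 until first reaching p4 one meets p2 then p3,
   with p2 and p3 distinct positions. *)
Definition chain_le_lt_le (N p1 p2 p3 p4 : nat) : bool :=
  [&& cwd N p1 p2 <= cwd N p1 p3, p2 != p3 & cwd N p1 p3 <= cwd N p1 p4].

From mathcomp Require Import all_boot all_order all_algebra.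
From mathcomp Require Import zify.

(** Put a_1 at position 0, so that b_(k+2) sits at position k+1.  Every
    b in B(a_1,S) lies in [0,k] and every a in A(b_(k+2),S) in [1,k+1];
    independence of (a_1,b) and (a,b_(k+2)) forces a - b >= n whenever b < a.
    Take such a pair (b,a) with a - b minimal.  Then B(a_1,S), the set
    A(b_(k+2),S) shifted down by one, and the open interval (b, a-1) are
    pairwise disjoint subsets of [0,k], whence
    |B(a_1,S)| + |A(b_(k+2),S)| + (a - b - 2) <= k + 1. *)

Lemma cwd_le N p q : p <= q -> q < N -> cwd N p q = q - p.
Proof.
move=> pq qN; rewrite /cwd.
have -> : q + N - p = q - p + N by lia.
by rewrite modnDr modn_small //; lia.
Qed.

Lemma cwd_gt N p q : q < p -> p < N -> cwd N p q = q + N - p.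
Proof. by move=> qp pN; rewrite /cwd modn_small //; lia. Qed.

Lemma cwd0 N (q : 'I_N) : cwd N 0 q = q.
Proof. by rewrite cwd_le ?subn0. Qed.

Lemma chain_le_lt_le_from0 N (p2 p3 : 'I_N) p4 :
  chain_le_lt_le N 0 p2 p3 p4 -> p2 < p3.
Proof.
rewrite /chain_le_lt_le !cwd0 ltn_neqAle.
by case/and3P=> -> ->.
Qed.

Lemma ord_pred_val N (i : 'I_N) : 0 < i -> ord_pred i = i.-1 :> nat.
Proof.
move=> i_gt0 /=; have iN := ltn_ord i.
have -> : (i + N).-1 = i.-1 + N by lia.
by rewrite modnDr modn_small //; lia.
Qed.

Lemma card_ord_range N m p : p <= N -> #|[set i : 'I_N | m <= i < p]| = p - m.
Proof.
elim: p => [|p IHp] pN.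
  by apply/eqP; rewrite cards_eq0; apply/eqP/setP => i; rewrite !inE; lia.
have [pm | mp] := ltnP p m.
  have -> : p.+1 - m = 0 by lia.
  by apply/eqP; rewrite cards_eq0; apply/eqP/setP => i; rewrite !inE; lia.
have -> : [set i : 'I_N | m <= i < p.+1] = Ordinal pN |: [set i : 'I_N | m <= i < p].
  by apply/setP => i; rewrite !inE -val_eqE /=; lia.
by rewrite cardsU1 IHp ?(ltnW pN) // inE /= ltnn andbF; lia.
Qed.

Lemma min_gap_pair {N} {Bs As : {set 'I_N}} {b0 a0 : 'I_N} :
  b0 \in Bs -> a0 \in As -> b0 < a0 ->
  exists b a : 'I_N, [/\ b \in Bs, a \in As, b < a &
    {in Bs & As, forall i j : 'I_N, i < j -> a - b <= j - i}].
Proof.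
move=> b0B a0A b0a0.
pose P (p : 'I_N * 'I_N) := [&& p.1 \in Bs, p.2 \in As & p.1 < p.2].
have P0 : P (b0, a0) by rewrite /P /= b0B a0A.
case: (arg_minnP (fun p : 'I_N * 'I_N => p.2 - p.1) P0) => [[b a]] /and3P[bB aA ba] min_ba.
by exists b, a; split=> // i j iB jA ij; apply: (min_ba (i, j)); rewrite /P /= iB jA.
Qed.

Lemma card_gap_bound {N k} {Bs As : {set 'I_N}} {b a : 'I_N} :
  k < N ->
  {in Bs, forall i : 'I_N, i <= k} ->
  {in As, forall j : 'I_N, 0 < j <= k.+1} ->
  b \in Bs -> a \in As -> 1 < a - b ->
  {in Bs & As, forall i j : 'I_N, i < j -> a - b <= j - i} ->
  #|Bs| + #|As| + (a - b) <= k + 3.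
Proof.
move=> kN Bs_le As_range bB aA gap_gt1 min_ba.
have Bs_out i : i \in Bs -> (i <= b) || (a <= i).
  move=> iB; have [ia | ] := ltnP i a; last by rewrite orbT.
  by have := min_ba i a iB aA ia; lia.
have As_out j : j \in As -> (j <= b) || (a <= j).
  move=> jA; have [bj | ] := ltnP b j; last by rewrite orTb.
  by have := min_ba b j bB jA bj; lia.
pose Ps := @ord_pred N @: As.
have inPs i : i \in Ps -> exists2 j, j \in As & i = j.-1 :> nat.
  case/imsetP=> j jA ->; exists j => //.
  by rewrite ord_pred_val //; case/andP: (As_range j jA).
pose W := [set i : 'I_N | 0 <= i < k.+1].
pose Z := [set i : 'I_N | b.+1 <= i < a.-1].
have cardW : #|W| = k.+1 by rewrite card_ord_range.
have cardZ : #|Z| = a.-1 - b.+1 by rewrite card_ord_range //; have := ltn_ord a; lia.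
have cardPs : #|Ps| = #|As| by apply: card_imset; apply: ord_pred_inj.
have Bs_Ps : [disjoint Bs & Ps].
  apply/pred0P => i /=; apply/negP => /andP[iB /inPs[j jA ij]].
  case/andP: (As_range j jA) => j_gt0 _.
  have ij_lt : i < j by lia.
  by have := min_ba i j iB jA ij_lt; lia.
have BsPs_sub : Bs :|: Ps \subset W :\: Z.
  apply/subsetP => i; rewrite !inE => /orP[iB | /inPs[j jA ij]].
    by have := Bs_le i iB; have := Bs_out i iB; lia.
  by have := As_range j jA; have := As_out j jA; lia.
have Z_W : Z \subset W by apply/subsetP => i; rewrite !inE; have := As_range a aA; lia.
have cardBsPs : #|Bs :|: Ps| = #|Bs| + #|As|.
  by move/leqifP: (leq_card_setU Bs Ps); rewrite Bs_Ps cardPs => /eqP.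
have := subset_leq_card BsPs_sub; rewrite cardBsPs cardsDS // cardW cardZ.
by have := As_range a aA; lia.
Qed.

Section CrownIncomparability.

Context {n k : nat}.
Implicit Types i j : 'I_(n+k).

Lemma incomp_le i j : i <= j -> incomp n k i j = (j - i <= k).
Proof. by move=> ij; rewrite /incomp cwd_le. Qed.

Lemma incomp_gt i j : j < i -> incomp n k i j = (n <= i - j).
Proof. by move=> ji; rewrite /incomp cwd_gt //; have := ltn_ord i; lia. Qed.

Lemma incomp_from0 i j : i = 0 :> nat -> incomp n k i j = (j <= k).
Proof. by move=> i0; rewrite incomp_le i0 ?subn0. Qed.

Lemma incomp_to_kS i j : j = k.+1 :> nat -> incomp n k i j = (0 < i <= k.+1).
Proof.
move=> jkS; have [ij | ji] := leqP i j.
  by rewrite incomp_le // jkS; lia.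
by rewrite incomp_gt //; have := ltn_ord i; lia.
Qed.

Lemma independent_incomp {S : {set 'I_(n+k) * 'I_(n+k)}} :
  independent n k S -> {in S, forall p, incomp n k p.1 p.2}.
Proof. by case/andP=> /subsetP S_Inc _ p /S_Inc; rewrite inE. Qed.

Lemma independent_nonadj {S : {set 'I_(n+k) * 'I_(n+k)}} :
  independent n k S -> {in S &, forall p q, ~~ adjG n k p q}.
Proof. by case/andP=> _ /forall_inP S_indep p q /S_indep /forall_inP; apply. Qed.

End CrownIncomparability.

Section CrownCorner.

Context {n k : nat} {S : {set 'I_(n+k) * 'I_(n+k)}} {a1 bk2 : 'I_(n+k)}.
Hypotheses (a1_0 : a1 = 0 :> nat) (bk2_kS : bk2 = k.+1 :> nat).
Hypothesis S_indep : independent n k S.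

Lemma Bset_le b : b \in Bset n k a1 S -> b <= k.
Proof. by rewrite inE => /(independent_incomp S_indep); rewrite incomp_from0. Qed.

Lemma Aset_range a : a \in Aset n k bk2 S -> 0 < a <= k.+1.
Proof. by rewrite inE => /(independent_incomp S_indep); rewrite incomp_to_kS. Qed.

Lemma Bset_Aset_gap {b a} :
  b \in Bset n k a1 S -> a \in Aset n k bk2 S -> b < a -> n <= a - b.
Proof.
rewrite !inE => bS aS ba; have := independent_nonadj S_indep _ _ bS aS.
by rewrite /adjG /ltAB /= incomp_from0 // bk2_kS ltnn negbK incomp_gt.
Qed.

End CrownCorner.

Local Open Scope ring_scope.

Theorem lemma6p6 (n k : nat) (hn : (3 <= n)%N)
  (S : {set 'I_(n+k) * 'I_(n+k)}) (a1 bk2 x y : 'I_(n+k)) :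
  nat_of_ord a1 = 0%N -> nat_of_ord bk2 = k.+1 ->
  independent n k S ->
  (a1, y) \in S -> (x, bk2) \in S ->
  chain_le_lt_le (n+k) a1 y x bk2 ->
  ((#|Bset n k a1 S| + #|Aset n k bk2 S|)%N%:Z <= k%:Z + 3 - n%:Z).
Proof.
move=> a1_0 bk2_kS S_indep a1yS xbk2S chain.
have yB : y \in Bset n k a1 S by rewrite inE.
have xA : x \in Aset n k bk2 S by rewrite inE.
have yx : (y < x)%N by move: chain; rewrite a1_0 => /chain_le_lt_le_from0.
have [b [a [bB aA ba min_ba]]] := min_gap_pair yB xA yx.
have gap_ba := Bset_Aset_gap a1_0 bk2_kS S_indep bB aA ba.
have kN : (k < n + k)%N by lia.
have := card_gap_bound kN (Bset_le a1_0 S_indep) (Aset_range bk2_kS S_indep)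
  bB aA _ min_ba.
lia.
Qed.
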